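(* Let $R$ be any finite Frobenius ring and let $\mathcal{P}_{\mathrm{hom}}=P_0\mid P_1\mid\cdots\mid P_M$ be its homogeneous weight partition. Then for each generating character $\chi$ of $R$, \[ \sum_{a\in P_m}\chi(ab)=\sum_{a\in P_m}\chi(ba)\quad\text{for all } b\in R \text{ and } m=0,\ldots,M. \] As a consequence, the left and right dual partitions of $\mathcal{P}_{\mathrm{hom}}$ coincide.
   Context: $\mathcal{P}_{\mathrm{hom}}$ is the partition of $R$ into level sets of the normalized homogeneous weight $\omega$ (the unique map $R\to\mathbb{R}$ with $\omega(0)=0$, $\omega(x)=\omega(y)$ whenever $Rx=Ry$, and $\sum_{y\in Rx}\omega(y)=|Rx|$ for $x\neq0$). Characters are group homomorphisms $(R,+)\to\mathbb{C}^*$; $\widehat{R}$ is an $R$-$R$-bimodule via $(r\cdot\chi)(v)=\chi(vr)$, $(\chi\cdot r)(v)=\chi(rv)$; a generating character is $\chi$ with $\widehat{R}=R\cdot\chi$ (equivalently $\widehat{R}=\chi\cdot R$); $R$ is Frobenius iff one exists. For a partition $\mathcal{P}=P_0\mid\cdots\mid P_M$ of $R$, the left $\chi$-dual partition is given by $b\sim b'$ iff $\sum_{a\in P_m}\chi(ab)=\sum_{a\in P_m}\chi(ab')$ for all $m$, and the right $\chi$-dual by $b\sim b'$ iff $\sum_{a\in P_m}\chi(ba)=\sum_{a\in P_m}\chi(b'a)$ for all $m$. *)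

From HB Require Import structures.
From mathcomp Require Import all_boot all_order all_algebra all_field.
Set Implicit Arguments. Unset Strict Implicit. Unset Printing Implicit Defensive.
Import Order.TTheory GRing.Theory Num.Theory.
Local Open Scope ring_scope.

(* A character of the additive group (R,+), valued in the complex numbers
   (algebraic complex numbers algC suffice: character values are roots of unity). *)
Definition is_character (R : finPzRingType) (chi : R -> algC) : Prop :=
  (forall x y : R, chi (x + y) = chi x * chi y) /\ (forall x : R, chi x != 0).

Definition lact (R : finPzRingType) (r : R) (chi : R -> algC) : R -> algC :=
  fun v => chi (v * r).

Definition generating_character (R : finPzRingType) (chi : R -> algC) : Prop :=
  is_character chi /\
  forall psi : R -> algC, is_character psi -> exists r : R, psi =1 lact r chi.

Definition frobenius_ring (R : finPzRingType) : Prop :=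
  exists chi : R -> algC, generating_character chi.

Definition lideal (R : finPzRingType) (x : R) : {set R} := [set r * x | r : R].

(* The normalized homogeneous weight (characterized by its defining properties;
   it is unique). *)
Definition homogeneous_weight (R : finPzRingType) (w : R -> algC) : Prop :=
  [/\ w 0 = 0,
      (forall x : R, w x \is Num.real),
      (forall x y : R, lideal x = lideal y -> w x = w y) &
      (forall x : R, x != 0 -> \sum_(y in lideal x) w y = #|lideal x|%:R)].

Definition hom_block (R : finPzRingType) (w : R -> algC) (c : algC) : {set R} :=
  [set a : R | w a == c].

(* Left and right chi-dual partitions of the partition into level sets of w. *)
Definition left_dual_rel (R : finPzRingType) (w : R -> algC) (chi : R -> algC)
  (b b' : R) : Prop :=
  forall c : algC, \sum_(a in hom_block w c) chi (a * b)
                 = \sum_(a in hom_block w c) chi (a * b').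

Definition right_dual_rel (R : finPzRingType) (w : R -> algC) (chi : R -> algC)
  (b b' : R) : Prop :=
  forall c : algC, \sum_(a in hom_block w c) chi (b * a)
                 = \sum_(a in hom_block w c) chi (b' * a).

From HB Require Import structures.
From mathcomp Require Import all_boot all_order all_algebra all_field.
From mathcomp Require Import fingroup classfun character.
Import Order.TTheory GRing.Theory Num.Theory.
Local Open Scope ring_scope.
Set Implicit Arguments. Unset Strict Implicit.

(* For a generating character chi, the character a |-> chi (b a) is again of
   the form a |-> chi (a s), and the resulting Nakayama permutation
   b |-> s of R is multiplicative, so it maps each principal left ideal Rx
   onto R (s x).  Hence w composed with it satisfies the axioms of the
   homogeneous weight, which are shown to determine w, so the permutation
   preserves every block of the weight partition; reindexing the sum over a
   block along it turns sum chi (b a) into sum chi (a b). *)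

Lemma characterB (R : finPzRingType) (chi : R -> algC) :
  is_character chi -> forall x y, chi (x - y) = chi x / chi y.
Proof.
move=> [chiD chi_neq0] x y.
by apply: (mulIf (chi_neq0 y)); rewrite -chiD subrK mulfVK.
Qed.

Section GeneratingCharacter.
Variables (R : finPzRingType) (chi : R -> algC).
Hypothesis chi_gen : generating_character chi.

Let gT : finGroupType := FinRing.Zmodule_to_finGroup (R : finZmodType).
Let G := [set: gT].

Lemma irr_linear (i : Iirr G) : 'chi_i \is a linear_char.
Proof. by apply/char_abelianP; exact: FinRing.zmod_abelian. Qed.

Lemma irr_character (i : Iirr G) : is_character (fun x : R => 'chi_i (x : gT)).
Proof.
split=> [x y|x].
  by have := lin_charM (irr_linear i) (in_setT (x : gT)) (in_setT (y : gT)).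
by rewrite (lin_char_neq0 (irr_linear i)) ?inE.
Qed.

Lemma irr_lact_exists (i : Iirr G) :
  exists r : R, [forall x : R, 'chi_i (x : gT) == chi (x * r)].
Proof.
have [r chi_i_r] := chi_gen.2 _ (irr_character i).
by exists r; apply/forallP => x; rewrite chi_i_r.
Qed.

Let irr_coef (i : Iirr G) : R := xchoose (irr_lact_exists i).

Lemma irr_coefE i x : 'chi_i (x : gT) = chi (x * irr_coef i).
Proof. by have /forallP/(_ x)/eqP := xchooseP (irr_lact_exists i). Qed.

Lemma irr_coef_inj : injective irr_coef.
Proof.
move=> i j eq_ij; apply: irr_inj; apply/cfunP => x.
by rewrite !irr_coefE eq_ij.
Qed.

(* As many irreducible characters as elements: every r is some irr_coef i. *)
Lemma irr_coef_onto r : r \in codom irr_coef.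
Proof.
apply: inj_card_onto irr_coef_inj _ r.
by rewrite card_Iirr_abelian ?FinRing.zmod_abelian // cardsT.
Qed.

Lemma lact_inj r r' : lact r chi =1 lact r' chi -> r = r'.
Proof.
have /codomP [i ->] := irr_coef_onto r; have /codomP [j ->] := irr_coef_onto r'.
move=> eq_ij; congr irr_coef; apply: irr_inj; apply/cfunP => x.
by rewrite !irr_coefE; exact: eq_ij.
Qed.

(* d lies in the kernel of every 'chi_i = irr_coef i . chi, and these kernels
   meet trivially. *)
Lemma generating_right_faithful d : (forall a, chi (d * a) = 1) -> d = 0.
Proof.
move=> chi_d1.
have: (d : gT) \in \bigcap_i cfker 'chi[G]_i.
  apply/bigcapP => i _; rewrite cfkerEirr inE.
  by rewrite irr_coefE chi_d1 -(lin_char1 (irr_linear i)) irr_coefE.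
by rewrite TI_cfker_irr inE => /eqP.
Qed.

Lemma nakayama_exists (b : R) :
  exists s : R, [forall a : R, chi (b * a) == chi (a * s)].
Proof.
have b_char : is_character (fun a => chi (b * a)).
  by split=> [x y|x]; rewrite ?mulrDr ?chi_gen.1.1 ?chi_gen.1.2.
have [s chi_bs] := chi_gen.2 _ b_char.
by exists s; apply/forallP => a; rewrite chi_bs.
Qed.

Definition nakayama (b : R) : R := xchoose (nakayama_exists b).

Lemma nakayamaP b a : chi (b * a) = chi (a * nakayama b).
Proof. by have /forallP/(_ a)/eqP := xchooseP (nakayama_exists b). Qed.

Lemma nakayamaM a b : nakayama (a * b) = nakayama a * nakayama b.
Proof.
apply: lact_inj => x; rewrite /lact.
by rewrite -nakayamaP -mulrA nakayamaP -mulrA nakayamaP -mulrA.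
Qed.

Lemma nakayama0 : nakayama 0 = 0.
Proof. by apply: lact_inj => x; rewrite /lact -nakayamaP !mul0r mulr0. Qed.

Lemma nakayama_inj : injective nakayama.
Proof.
move=> b b' eq_bb'; apply/eqP; rewrite -subr_eq0; apply/eqP.
apply: generating_right_faithful => a.
rewrite mulrBl (characterB chi_gen.1) nakayamaP (nakayamaP b') eq_bb' divff //.
exact: chi_gen.1.2.
Qed.

Lemma lideal_nakayama x : lideal (nakayama x) = nakayama @: lideal x.
Proof.
apply/setP => y; apply/imsetP/imsetP => [[r _ ->]|[_ /imsetP [r _ ->] ->]].
  have /codomP [r0 ->] := inj_card_onto nakayama_inj (leqnn _) r.
  by exists (r0 * x); [exact: imset_f | rewrite nakayamaM].
by exists (nakayama r); rewrite ?nakayamaM.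
Qed.

End GeneratingCharacter.

Section HomogeneousWeight.
Variable R : finPzRingType.

Lemma mem_lideal (x y : R) : reflect (exists r, y = r * x) (y \in lideal x).
Proof. by apply: (iffP imsetP) => [[r _ ->]|[r ->]]; exists r. Qed.

Lemma lideal_refl (x : R) : x \in lideal x.
Proof. by apply/mem_lideal; exists 1; rewrite mul1r. Qed.

Lemma lideal_subset (x y : R) : y \in lideal x -> lideal y \subset lideal x.
Proof.
case/mem_lideal=> r ->; apply/subsetP => _ /mem_lideal [s ->].
by apply/mem_lideal; exists (s * r); rewrite mulrA.
Qed.

(* The summation axiom at x splits into the generators y of Rx, where the two
   weights take the constant values w1 x, w2 x, and smaller ideals Ry, where
   they agree by induction on #|Rx|. *)
Lemma homogeneous_weight_unique (w1 w2 : R -> algC) :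
  homogeneous_weight w1 -> homogeneous_weight w2 -> w1 =1 w2.
Proof.
move=> [w1_0 _ w1_id w1_sum] [w2_0 _ w2_id w2_sum] x.
elim: {x}#|lideal x| {-2}x (leqnn #|lideal x|) => [|n IHn] x.
  by rewrite leqn0 => /eqP/cards0_eq/setP/(_ x); rewrite lideal_refl inE.
move=> card_x; have [->|x_neq0] := eqVneq x 0; first by rewrite w1_0 w2_0.
have := w1_sum x x_neq0; rewrite -(w2_sum x x_neq0).
rewrite (bigID (fun y => lideal y == lideal x)) /=.
rewrite [in X in _ = X -> _](bigID (fun y => lideal y == lideal x)) /=.
have -> : \sum_(y in lideal x | lideal y != lideal x) w1 y
        = \sum_(y in lideal x | lideal y != lideal x) w2 y.
  apply: eq_bigr => y /andP [y_x neq_yx]; apply: IHn.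
  have: lideal y \proper lideal x by rewrite properEneq neq_yx lideal_subset.
  by move/proper_card => lt_yx; rewrite -ltnS (leq_trans lt_yx card_x).
move/addIr; rewrite (eq_bigr (fun=> w1 x)) => [|y /andP [_ /eqP]]; last exact: w1_id.
rewrite [in X in _ = X -> _](eq_bigr (fun=> w2 x)) => [|y /andP [_ /eqP]]; last exact: w2_id.
rewrite !sumr_const => /pmulrnI; apply; apply/card_gt0P; exists x.
by rewrite unfold_in lideal_refl eqxx.
Qed.

Variables (chi : R -> algC) (w : R -> algC).
Hypotheses (chi_gen : generating_character chi) (w_hom : homogeneous_weight w).

Lemma homogeneous_weight_nakayama x : w (nakayama chi_gen x) = w x.
Proof.
have nak_inj := nakayama_inj (chi_gen:=chi_gen).
have [w_0 w_real w_id w_sum] := w_hom.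
apply: (homogeneous_weight_unique (w1 := w \o nakayama chi_gen) _ w_hom).
split=> [|y|y z eq_yz|y y_neq0] /=.
- by rewrite nakayama0.
- exact: w_real.
- by apply: w_id; rewrite !lideal_nakayama eq_yz.
have ny_neq0 : nakayama chi_gen y != 0.
  by apply: contra_neq y_neq0 => ny0; apply: nak_inj; rewrite ny0 nakayama0.
rewrite -(big_imset w (in2W nak_inj)) -lideal_nakayama w_sum //.
by rewrite lideal_nakayama card_imset.
Qed.

Lemma sum_hom_block_mulC (b : R) (c : algC) :
  \sum_(a in hom_block w c) chi (a * b) = \sum_(a in hom_block w c) chi (b * a).
Proof.
rewrite [RHS](eq_bigr (fun a => chi (a * nakayama chi_gen b))) => [|a _].
  rewrite [RHS](reindex_inj (nakayama_inj (chi_gen:=chi_gen))) /=.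
  apply: eq_big => [a|a _]; first by rewrite !inE homogeneous_weight_nakayama.
  by rewrite (nakayamaP _ a) (nakayamaP _ b).
exact: nakayamaP.
Qed.

End HomogeneousWeight.
Unset Implicit Arguments. Set Strict Implicit.

Theorem theorem5p12 (R : finPzRingType) (w : R -> algC) :
  frobenius_ring R ->
  homogeneous_weight w ->
  forall chi : R -> algC, generating_character chi ->
    (forall (b : R) (c : algC),
        \sum_(a in hom_block w c) chi (a * b)
      = \sum_(a in hom_block w c) chi (b * a)) /\
    (forall b b' : R, left_dual_rel w chi b b' <-> right_dual_rel w chi b b').
Proof.
move=> _ w_hom chi chi_gen; have mulC := sum_hom_block_mulC chi_gen w_hom.
split=> // b b'; split=> dual_bb' c; first by rewrite -!mulC.
by rewrite !mulC.
Qed.
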